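(* Let $L$ be a finite field of characteristic $p$ and cardinality $q>2$. Let $s$ be a positive integer with $s\equiv 1\pmod{p-1}$ and $\gcd(s,q-1)=1$, and let $f\colon L\to L$ be the power function $f(x)=x^s$. Then $\mathfrak{D}(f)\equiv 0\pmod 3$.
   Context: Let $\mu$ be the canonical additive character of $L$, $\mu(x)=\exp(2i\pi\,\mathrm{Tr}(x)/p)$, where $\mathrm{Tr}$ is the trace of $L/\mathbb{F}_p$. The Fourier coefficient of $f$ at $a\in L$ is $\widehat{f}(a)=\sum_{x\in L}\mu(ax+f(x))$; under the hypothesis $s\equiv 1\pmod{p-1}$ these are rational integers. Define $\mathfrak{D}(f)=\prod_{a\in L^{\times}}\widehat{f}(a)$. *)

From mathcomp Require Import all_boot all_order all_algebra all_field.
Set Implicit Arguments. Unset Strict Implicit. Unset Printing Implicit Defensive.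
Import Order.TTheory GRing.Theory Num.Theory.
Local Open Scope ring_scope.

Definition absTrace (L : finFieldType) (p : nat) (x : L) : L :=
  \sum_(i < logn p #|L|) x ^+ (p ^ i).

Definition absTraceNat (L : finFieldType) (p : nat) (x : L) : nat :=
  oapp (@nat_of_ord p) 0%N [pick k : 'I_p | (k%:R : L) == absTrace p x].

(* exp(2 i pi / p) in algC: p.-root (-1) is exp(i pi / p)
   (the root of -1 with minimal nonnegative argument). *)
Definition zeta_p (p : nat) : algC := (p.-root (-1)) ^+ 2.

Definition mu (L : finFieldType) (p : nat) (x : L) : algC :=
  zeta_p p ^+ absTraceNat p x.

Definition fourier (L : finFieldType) (p : nat) (f : L -> L) (a : L) : algC :=
  \sum_(x : L) mu p (a * x + f x).

Definition frakD (L : finFieldType) (p : nat) (f : L -> L) : algC :=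
  \prod_(a : L | a != 0) fourier p f a.

From mathcomp Require Import all_boot all_order all_algebra all_field zify ring.
Import Order.TTheory GRing.Theory Num.Theory.
Set Implicit Arguments.
Unset Strict Implicit.
Unset Printing Implicit Defensive.
Local Open Scope ring_scope.

(* Write W(a, c) = \sum_x mu (a x + c x^s) ([powsum]), so that the Fourier coefficients
   of f are W(a, 1), and q = #|L|. Each W(a, c) is a rational integer: it is fixed by
   the Galois action mu x |-> mu x ^+ k, because c x^s commutes with scaling by F_p
   (this is where s = 1 mod p - 1 is used). Suppose no W(a, 1), a <> 0, is divisible
   by 3. As x |-> x^s is a bijection, W(0, 1) = 0, hence W(a, 1)^2 = [a <> 0] mod 3.
   For u <> 0, orthogonality of mu gives
     \sum_(a, c) W(a, c)^2 mu (- (a + c u)) = q^2 N(u),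
   where N(u) is the number of x with x^s + (1 - x)^s = u ([nsol]). On the other hand
   W(a, c) = W(a t, 1) when c t^s = 1, so modulo 3 the row c = 0 contributes q^2 and
   each row c <> 0 contributes - mu (- c u); the left side is thus q^2 + 1 mod 3.
   Therefore N(u) = 2 mod 3, so N(u) >= 2 for all u <> 0, while the N(u) sum to q:
   this forces q <= 2. *)

Section PrimeCharacteristic.
Variables (R : fieldType) (p : nat).
Hypothesis charRp : p \in [pchar R].

Lemma eqr_nat_modp (m n : nat) : ((m%:R : R) == n%:R) = (m == n %[mod p]).
Proof.
wlog le_mn : m n / (m <= n)%N.
  move=> le_mod; case: (leqP m n) => [/le_mod // | /ltnW/le_mod].
  by rewrite eq_sym [RHS]eq_sym.
by rewrite [RHS]eq_sym eqn_mod_dvd // (dvdn_pcharf charRp) natrB // subr_eq0 eq_sym.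
Qed.

Lemma fixed_Frobenius_natr (y : R) : y ^+ p = y -> exists k : 'I_p, y = k%:R.
Proof.
move=> yp.
have [k /eqP y_k | no_k] := pickP (fun k : 'I_p => y == k%:R); first by exists k.
(* Otherwise 'X^p - 'X would have the p + 1 roots y, 0, 1, ..., p - 1. *)
pose P : {poly R} := 'X^p - 'X.
have sizeP : size P = p.+1.
  rewrite size_polyDl size_polyXn // size_polyN size_polyX ltnS.
  exact: prime_gt1 (pcharf_prime charRp).
have nzP : P != 0 by rewrite -size_poly_eq0 sizeP.
have : (size (y :: [seq (k%:R : R) | k <- iota 0 p]) < size P)%N.
  apply: max_poly_roots nzP _ _ => /=.
    apply/andP; split; first by rewrite rootE !hornerE yp subrr.
    apply/allP=> _ /mapP[k _ ->].
    by rewrite rootE !hornerE -(pFrobenius_autE charRp) rmorph_nat subrr.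
  rewrite map_inj_in_uniq ?iota_uniq ?andbT; last first.
    move=> i j; rewrite !mem_iota /= => lt_ip lt_jp /eqP.
    by rewrite eqr_nat_modp !modn_small // => /eqP.
  apply/mapP=> -[k]; rewrite mem_iota /= => lt_kp y_k.
  by have := no_k (Ordinal lt_kp); rewrite /= y_k eqxx.
by rewrite /= size_map size_iota sizeP ltnn.
Qed.

End PrimeCharacteristic.

Section AbsoluteTrace.
Variables (L : finFieldType) (p : nat).
Hypothesis charLp : p \in [pchar L].
Let n := logn p #|L|.
Let card_L : #|L| = (p ^ n)%N := card_pprimeChar charLp.

Lemma absTraceD (x y : L) : absTrace p (x + y) = absTrace p x + absTrace p y.
Proof.
rewrite -big_split; apply: eq_bigr => i _; apply: exprDn_pchar.
by rewrite pnatX (pnatE _ (pcharf_prime charLp)) charLp.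
Qed.

Lemma absTrace0 : absTrace p (0 : L) = 0.
Proof. by apply: (addrI (absTrace p (0 : L))); rewrite -absTraceD !addr0. Qed.

Lemma absTraceMn (x : L) k : absTrace p (x *+ k) = absTrace p x *+ k.
Proof. by elim: k => [|k IHk]; rewrite ?absTrace0 // !mulrS absTraceD IHk. Qed.

Lemma absTrace_Frobenius (x : L) : absTrace p x ^+ p = absTrace p x.
Proof.
rewrite -(pFrobenius_autE charLp) rmorph_sum /=.
under eq_bigr do rewrite pFrobenius_autE -exprM -expnSr.
(* Frobenius permutes the terms x ^+ (p ^ i) cyclically, as x ^+ (p ^ n) = x. *)
have : \sum_(i < n.+1) x ^+ (p ^ i) = \sum_(i < n.+1) x ^+ (p ^ i) by [].
rewrite {1}big_ord_recl big_ord_recr /= -card_L expf_card expn0 expr1 addrC.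
by move/addrI.
Qed.

Lemma absTraceNatE (x : L) : (absTraceNat p x)%:R = absTrace p x.
Proof.
rewrite /absTraceNat; case: pickP => [k /eqP // | no_k].
have [k Tx] := fixed_Frobenius_natr charLp (absTrace_Frobenius x).
by have := no_k k; rewrite Tx eqxx.
Qed.

Lemma absTrace_neq0 : exists x : L, absTrace p x != 0.
Proof.
have p_gt1 := prime_gt1 (pcharf_prime charLp).
have [x Tx | Tx0] := pickP (fun x : L => absTrace p x != 0); first by exists x.
have n_gt0 : (0 < n)%N.
  by rewrite lt0n; apply: contraTneq (finNzRing_gt1 L) => n0; rewrite card_L n0.
(* Otherwise every x is a root of the trace polynomial, of degree p ^ n.-1 < #|L|. *)
pose P : {poly L} := \sum_(i < n) 'X^(p ^ i).
have coefP j : P`_j = \sum_(i < n) (j == (p ^ i)%N)%:R.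
  by rewrite coef_sum; apply: eq_bigr => i _; rewrite coefXn.
have nzP : P != 0.
  apply/eqP => /(congr1 (fun P : {poly L} => P`_(p ^ n.-1))).
  rewrite coefP coef0 -(prednK n_gt0) big_ord_recr /= eqxx big1 ?add0r.
    by move/eqP; rewrite oner_eq0.
  by move=> [i lt_in] _; rewrite /= eqn_exp2l // gtn_eqF.
have sizeP : (size P <= (p ^ n.-1).+1)%N.
  apply/leq_sizeP => j lt_j; rewrite coefP big1 // => i _.
  by case: eqP lt_j => // ->; rewrite ltn_exp2l // ltnNge -ltnS prednK ?ltn_ord.
have : (size (enum L) < size P)%N.
  apply: max_poly_roots nzP _ (enum_uniq _); apply/allP => x _.
  by rewrite rootE horner_sum; under eq_bigr do rewrite hornerXn; rewrite -[_ == 0]negbK Tx0.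
rewrite -cardE card_L -(prednK n_gt0) expnS => /leq_trans/(_ sizeP).
have : (0 < p ^ n.-1)%N by rewrite expn_gt0 ltnW.
by rewrite ltnS; nia.
Qed.

End AbsoluteTrace.

Lemma norm1_Re_ge1 (z : algC) : `|z| = 1 -> 1 <= 'Re z -> z = 1.
Proof.
move=> z1 Re_z; have [Re_le _] := leif_Re_Creal z.
have : 'Re z == `|z| by rewrite eq_le Re_le z1 Re_z.
by rewrite (leif_Re_Creal z).2 => /ger0_norm; rewrite z1.
Qed.

(* n.-root (-1) has the largest real part among the n-th roots of -1 in the upper
   half-plane, and -w or -w^* is such a root with real part > -1 whenever w is an
   n-th root of unity other than 1. *)
Lemma rootCN1_neqN1 n : (1 < n)%N -> n.-root (-1 : algC) != -1.
Proof.
move=> n_gt1; have n_gt0 := ltnW n_gt1; apply/eqP => r_N1.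
have [w prim_w] := C_prim_root_exists n_gt0.
have wn : w ^+ n = 1 := prim_expr_order prim_w.
have w_neq1 : w != 1.
  apply: contraTneq n_gt1 => w1; have := prim_order_dvd prim_w 1.
  by rewrite w1 expr1 eqxx dvdn1 => /eqP ->.
have N1n : (-1 : algC) ^+ n = -1 by rewrite -{1}r_N1 rootCK.
have Re_max (y : algC) : y ^+ n = -1 -> 0 <= 'Im y -> 'Re y <= -1.
  move=> yn Im_y; have := rootC_Re_max n_gt0 yn Im_y.
  by rewrite r_N1 raddfN /= (Creal_ReP 1 (rpred1 _)).
clear prim_w; wlog Im_w : w wn w_neq1 / 'Im w <= 0.
  move=> gen; have [|Im_w] := real_leP (algCreal_Im w) (real0 _); first exact: gen.
  apply: (gen w^*); first by rewrite -rmorphXn wn rmorph1.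
    by apply: contra w_neq1 => /eqP w1; rewrite -[w]conjCK w1 rmorph1.
  by rewrite Im_conj oppr_le0 ltW.
have Re_w : 1 <= 'Re w.
  have := Re_max (- w); rewrite exprNn wn mulr1 N1n !raddfN /= lerN2 oppr_ge0.
  by apply.
have norm_w : `|w| = 1.
  by apply/eqP; rewrite -(pexpr_eq1 n_gt0) // -normrX wn normr1.
by rewrite (norm1_Re_ge1 norm_w Re_w) eqxx in w_neq1.
Qed.

Lemma zeta_p_prim p : prime p -> p.-primitive_root (zeta_p p).
Proof.
move=> p_pr; have p_gt0 := prime_gt0 p_pr.
have zeta_p_exp : zeta_p p ^+ p = 1.
  by rewrite /zeta_p -exprM mulnC exprM rootCK // sqrrN expr1n.
have zeta_neq1 : zeta_p p != 1.
  rewrite /zeta_p sqrf_eq1 negb_or rootCN1_neqN1 ?prime_gt1 // andbT.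
  apply/eqP => r1; have := rootCK p_gt0 (-1 : algC).
  by rewrite r1 expr1n => /eqP; rewrite gt_eqF // (lt_trans (ltrN10 _) ltr01).
have [d prim_d d_dvd_p] := prim_order_exists p_gt0 zeta_p_exp.
case/primeP: p_pr => _ /(_ d d_dvd_p)/orP[/eqP d1 | /eqP d_p].
  by move: zeta_neq1; rewrite -[X in _ != X](prim_expr_order prim_d) d1 expr1 eqxx.
by rewrite d_p in prim_d.
Qed.

Lemma sum_expr_unity_int (w : algC) n : (0 < n)%N -> w ^+ n = 1 ->
  \sum_(1 <= k < n) w ^+ k \in Num.int.
Proof.
move=> n_gt0 wn.
have -> : \sum_(1 <= k < n) w ^+ k = \sum_(k < n) w ^+ k - 1.
  by rewrite -(prednK n_gt0) big_ord_recl big_add1 big_mkord /= expr0 addrC addKr.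
have [-> | w_neq1] := eqVneq w 1.
  rewrite (eq_bigr (fun=> 1)) => [|k _]; last exact: expr1n.
  by rewrite sumr_const card_ord rpredB ?rpredMn ?rpred1.
have : (w - 1) * \sum_(k < n) w ^+ k = 0 by rewrite -subrX1 wn subrr.
move/eqP; rewrite mulf_eq0 subr_eq0 (negbTE w_neq1) => /eqP ->.
by rewrite sub0r rpredN rpred1.
Qed.

Section AdditiveCharacter.
Variables (L : finFieldType) (p : nat).
Hypothesis charLp : p \in [pchar L].
Let p_pr : prime p := pcharf_prime charLp.
Let zeta_prim : p.-primitive_root (zeta_p p) := zeta_p_prim p_pr.

Lemma muE (x : L) m : m%:R = absTrace p x -> mu p x = zeta_p p ^+ m.
Proof.
move=> Tx; apply/eqP; rewrite (eq_prim_root_expr zeta_prim) -(eqr_nat_modp charLp).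
by rewrite absTraceNatE // Tx.
Qed.

Lemma muD (x y : L) : mu p (x + y) = mu p x * mu p y.
Proof.
rewrite [mu p x]/mu [mu p y]/mu -exprD; apply: muE.
by rewrite natrD !absTraceNatE // absTraceD.
Qed.

Lemma mu0 : mu p (0 : L) = 1.
Proof. by rewrite (@muE 0 0) ?absTrace0. Qed.

Lemma muMn (x : L) k : mu p (x *+ k) = mu p x ^+ k.
Proof.
rewrite [mu p x]/mu -exprM; apply: muE.
by rewrite natrM absTraceNatE // absTraceMn // mulr_natr.
Qed.

Lemma mu_eq1 (x : L) : (mu p x == 1) = (absTrace p x == 0).
Proof. by rewrite /mu -(prim_order_dvd zeta_prim) (dvdn_pcharf charLp) absTraceNatE. Qed.

Lemma mu_unity (x : L) : mu p x ^+ p = 1.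
Proof. by rewrite /mu exprAC (prim_expr_order zeta_prim) expr1n. Qed.

Lemma mu_Aint (x : L) : mu p x \in Aint.
Proof. by apply: (Aint_unity_root (prime_gt0 p_pr)); apply/unity_rootP/mu_unity. Qed.

Lemma sum_mu : \sum_(x : L) mu p x = 0.
Proof.
have [y Ty] := absTrace_neq0 charLp.
have : (\sum_(x : L) mu p x) * (1 - mu p y) = 0.
  apply/eqP; rewrite mulrBr mulr1 mulr_suml subr_eq0 {1}(reindex_inj (addIr y)) /=.
  by apply/eqP; apply: eq_bigr => x _; rewrite muD.
by move/eqP; rewrite mulf_eq0 subr_eq0 [1 == _]eq_sym mu_eq1 (negbTE Ty) orbF => /eqP.
Qed.

Lemma sum_muM (w : L) : \sum_(a : L) mu p (a * w) = if w == 0 then #|L|%:R else 0.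
Proof.
have [-> | w_neq0] := eqVneq w 0.
  by under eq_bigr do rewrite mulr0 mu0; rewrite sumr_const.
by have := sum_mu; rewrite (reindex_inj (mulIf w_neq0)).
Qed.

Lemma sum_muM_neq0 (w : L) : w != 0 -> \sum_(a : L | a != 0) mu p (a * w) = -1.
Proof.
move=> w_neq0; have := sum_muM w; rewrite (negbTE w_neq0) (bigD1 0) //= mul0r mu0.
by move/eqP; rewrite addrC addr_eq0 => /eqP.
Qed.

(* The sum S is invariant under the Galois action mu x |-> mu x ^+ k, 0 < k < p, so
   S *+ (p - 1) is a sum of the integers \sum_(1 <= k < p) mu (h x) ^+ k. *)
Lemma sum_mu_int (h : L -> L) : (forall x k, h (x *+ k) = h x *+ k) ->
  \sum_x mu p (h x) \in Num.int.
Proof.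
move=> hMn; have p_gt1 := prime_gt1 p_pr; set S := \sum_x _.
have S_pow k : (0 < k < p)%N -> S = \sum_x mu p (h x) ^+ k.
  case/andP=> k_gt0 k_lt_p; have k_neq0 : (k%:R : L) != 0.
    by rewrite -(dvdn_pcharf charLp) gtnNdvd.
  rewrite /S (reindex_inj (mulfI k_neq0)); apply: eq_bigr => x _.
  by rewrite mulr_natl hMn muMn.
have S_int : S *+ (p - 1) \in Num.int.
  rewrite -(sumr_const_nat p 1 S) (eq_big_nat _ _ S_pow) exchange_big.
  apply: rpred_sum => x _.
  exact: sum_expr_unity_int (prime_gt0 p_pr) (mu_unity (h x)).
have S_Aint : S \in Aint by apply: rpred_sum => x _; apply: mu_Aint.
have p1_neq0 : ((p - 1)%:R : algC) != 0 by rewrite pnatr_eq0 subn_eq0 -ltnNge.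
apply: Cint_rat_Aint S_Aint.
by rewrite -(mulfK p1_neq0 S) mulr_natr rpred_div ?rpred_nat // (rpred_int_num _ S_int).
Qed.

End AdditiveCharacter.

Lemma expf_coprime_inj (F : finFieldType) s :
  (0 < s)%N -> coprime s #|F|.-1 -> injective (fun x : F => x ^+ s).
Proof.
move=> s_gt0 cop x y /= xy_s.
have [y0 | y_neq0] := eqVneq y 0.
  by move: xy_s; rewrite y0 expr0n eqn0Ngt s_gt0 => /eqP; rewrite expf_eq0 s_gt0 => /eqP.
set t := x / y; have t_s : t ^+ s = 1 by rewrite expr_div_n xy_s divff // expf_neq0.
have t_neq0 : t != 0.
  by apply: contra_eq_neq t_s => ->; rewrite expr0n eqn0Ngt s_gt0 eq_sym oner_eq0.
have F_gt0 : (0 < #|F|)%N := ltnW (finNzRing_gt1 F).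
have card_gt0 : (0 < #|F|.-1)%N by rewrite -ltnS prednK ?finNzRing_gt1.
have t_card : t ^+ #|F|.-1 = 1.
  by apply: (mulfI t_neq0); rewrite mulr1 -exprS prednK ?expf_card.
have [d prim_t _] := prim_order_exists card_gt0 t_card.
have : (d %| gcdn s #|F|.-1)%N by rewrite dvdn_gcd !(prim_order_dvd prim_t) t_s t_card eqxx.
rewrite (eqP cop) dvdn1 => /eqP d1; move: (prim_expr_order prim_t); rewrite d1 expr1 => t1.
by rewrite -(divfK y_neq0 x) -/t t1 mul1r.
Qed.

Lemma expr_mod_pred_fixed (R : fieldType) (p s : nat) (c : R) :
  (0 < p)%N -> (0 < s)%N -> s = 1 %[mod p.-1] -> c ^+ p = c -> c ^+ s = c.
Proof.
move=> p_gt0 s_gt0 s_mod c_p; have [-> | c_neq0] := eqVneq c 0.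
  by rewrite expr0n eqn0Ngt s_gt0.
have c_p1 : c ^+ p.-1 = 1 by apply: (mulfI c_neq0); rewrite mulr1 -exprS prednK.
have /dvdnP[m s_m] : (p.-1 %| s - 1)%N by rewrite -eqn_mod_dvd // s_mod.
by rewrite -(subnK s_gt0) s_m mulnC exprD exprM c_p1 expr1n mul1r expr1.
Qed.

Lemma eqAmod_sum (I : finType) (P : pred I) (F G : I -> algC) e :
    (forall i, P i -> (F i == G i %[mod e])%A) ->
  (\sum_(i | P i) F i == \sum_(i | P i) G i %[mod e])%A.
Proof.
by move=> FG; apply: (big_ind2 (fun x y => (x == y %[mod e])%A)) => // *; apply: eqAmodD.
Qed.

Lemma sqr_mod3 (n : nat) : ~~ (3 %| n)%N -> (n ^ 2 == 1 %[mod 3])%N.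
Proof.
rewrite /dvdn -modnXm; have := ltn_pmod n (isT : 0 < 3)%N.
by case: (n %% 3)%N => [|[|[|?]]].
Qed.

Lemma sqr_mul_mod3 (q n : nat) : (q ^ 2 * n == q ^ 2 + 1 %[mod 3])%N -> (n %% 3 == 2)%N.
Proof.
rewrite -modnMm -modnDml -modnXm.
have := ltn_pmod q (isT : 0 < 3)%N; have := ltn_pmod n (isT : 0 < 3)%N.
by case: (q %% 3)%N => [|[|[|?]]]; case: (n %% 3)%N => [|[|[|?]]].
Qed.

Lemma Cint_sqr_mod3 (x : algC) :
  x \in Num.int -> ~~ (3 %| x)%C -> (x ^+ 2 == 1 %[mod 3])%A.
Proof.
move=> x_int; rewrite (dvdC_int 3) // => /sqr_mod3 floor_mod3.
rewrite -(intr_normK x_int) -[x](floorK x_int) -intr_norm -natr_absz -natrX.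
by rewrite (eqAmod_nat 3 _ 1).
Qed.

Section PowerSums.
Variables (L : finFieldType) (p s : nat).
Hypothesis charLp : p \in [pchar L].

Definition powsum (a c : L) : algC := \sum_x mu p (a * x + c * x ^+ s).

Definition nsol (u : L) : nat := #|[pred x : L | x ^+ s + (1 - x) ^+ s == u]|.

Lemma powsum_c0 (a : L) : powsum a 0 = if a == 0 then #|L|%:R else 0.
Proof.
rewrite /powsum -(sum_muM charLp); apply: eq_bigr => x _.
by rewrite mul0r addr0 mulrC.
Qed.

Lemma powsum_scale (a c t : L) :
  t != 0 -> c * t ^+ s = 1 -> powsum a c = powsum (a * t) 1.
Proof.
move=> t_neq0 ct_s; rewrite /powsum (reindex_inj (mulfI t_neq0)).
by apply: eq_bigr => x _; rewrite exprMn !mulrA ct_s !mul1r.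
Qed.

Lemma powsum0_1 : (0 < s)%N -> coprime s #|L|.-1 -> powsum 0 1 = 0.
Proof.
move=> s_gt0 cop; rewrite /powsum; under eq_bigr do rewrite mul0r add0r mul1r.
by have := sum_mu charLp; rewrite (reindex_inj (expf_coprime_inj s_gt0 cop)).
Qed.

Lemma powsum_int (a c : L) : (0 < s)%N -> s = 1 %[mod p.-1] -> powsum a c \in Num.int.
Proof.
move=> s_gt0 s_mod; apply: (sum_mu_int charLp) => x k.
have k_s : (k%:R : L) ^+ s = k%:R.
  apply: expr_mod_pred_fixed (prime_gt0 (pcharf_prime charLp)) s_gt0 s_mod _.
  by rewrite -(pFrobenius_autE charLp) rmorph_nat.
by rewrite -[x *+ k]mulr_natl -[RHS]mulr_natl exprMn k_s; ring.
Qed.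

Lemma sum_nsol : (\sum_u nsol u)%N = #|L|.
Proof.
rewrite -sum1_card [RHS](partition_big (fun x : L => x ^+ s + (1 - x) ^+ s) xpredT) //=.
by apply: eq_bigr => u _; rewrite /nsol -sum1_card; apply: eq_bigl => x; rewrite !inE.
Qed.

Lemma sum_powsum_sqr (u : L) :
  \sum_a \sum_c powsum a c ^+ 2 * mu p (- (a + c * u)) = (#|L| ^ 2 * nsol u)%:R.
Proof.
pose q : algC := #|L|%:R.
have exchange4 (F : L -> L -> L -> L -> algC) :
    \sum_a \sum_c \sum_x \sum_y F a c x y = \sum_x \sum_y \sum_a \sum_c F a c x y.
  under eq_bigr do (rewrite exchange_big; under eq_bigr do rewrite exchange_big).
  by rewrite exchange_big; under eq_bigr do rewrite exchange_big.
transitivity (\sum_a \sum_c \sum_x \sum_y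
    mu p (a * (x + y - 1)) * mu p (c * (x ^+ s + y ^+ s - u))).
  apply: eq_bigr => a _; apply: eq_bigr => c _.
  rewrite /powsum expr2 big_distrlr big_distrl; apply: eq_bigr => x _ /=.
  rewrite big_distrl; apply: eq_bigr => y _ /=.
  by rewrite -!(muD charLp); congr (mu p _); ring.
rewrite exchange4.
transitivity (\sum_x \sum_y (if y == 1 - x then q else 0) *
    (if x ^+ s + y ^+ s == u then q else 0)).
  apply: eq_bigr => x _; apply: eq_bigr => y _.
  rewrite -big_distrlr !(sum_muM charLp) !subr_eq0.
  by rewrite -[y == _](inj_eq (addrI x)) [x + (1 - x)]addrC subrK.
transitivity (\sum_x if x ^+ s + (1 - x) ^+ s == u then q * q else 0).
  apply: eq_bigr => x _; rewrite (bigD1 (1 - x)) //= eqxx big1 ?addr0.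
    by case: eqP; rewrite ?mulr0.
  by move=> y /negbTE ->; rewrite mul0r.
by rewrite -big_mkcond sumr_const natrM natrX mulr_natr expr2.
Qed.

Lemma sum_powsum_sqr_mod3 (u : L) : (0 < s)%N -> coprime s #|L|.-1 -> u != 0 ->
    (forall b, (powsum b 1 ^+ 2 == (b != 0)%:R %[mod 3])%A) ->
  (\sum_a \sum_c powsum a c ^+ 2 * mu p (- (a + c * u))
     == (#|L| ^ 2 + 1)%:R %[mod 3])%A.
Proof.
move=> s_gt0 cop u_neq0 sqr_mod3.
have [root_s _ root_sK] := injF_bij (expf_coprime_inj s_gt0 cop).
rewrite exchange_big (bigD1 0) //= natrD; apply: eqAmodD.
  rewrite (bigD1 0) //= big1 => [|a a_neq0].
    by rewrite powsum_c0 eqxx mul0r !addr0 oppr0 (mu0 charLp) mulr1 natrX.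
  by rewrite powsum_c0 (negbTE a_neq0) expr0n mul0r.
have row_mod3 c : c != 0 ->
    (\sum_a powsum a c ^+ 2 * mu p (- (a + c * u)) == - mu p (c * - u) %[mod 3])%A.
  move=> c_neq0; set t := root_s c^-1.
  have c_ts : c * t ^+ s = 1 by rewrite root_sK mulfV.
  have t_neq0 : t != 0.
    apply/eqP => t0; move: c_ts; rewrite t0 expr0n eqn0Ngt s_gt0 mulr0 => /eqP.
    by rewrite eq_sym oner_eq0.
  have tV_neq0 : t^-1 != 0 by rewrite invr_eq0.
  rewrite (reindex_inj (mulIf tV_neq0)) /=.
  have summand b : powsum (b / t) c ^+ 2 * mu p (- (b / t + c * u))
      = powsum b 1 ^+ 2 * (mu p (b * - t^-1) * mu p (c * - u)).
    rewrite (powsum_scale _ t_neq0 c_ts) divfK // -(muD charLp).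
    by congr (_ * mu p _); ring.
  rewrite (eq_bigr _ (fun b _ => summand b)).
  have mu2_Aint b : mu p (b * - t^-1) * mu p (c * - u) \in Aint.
    by rewrite rpredM ?(mu_Aint charLp).
  apply: eqAmod_trans (eqAmod_sum (fun b _ => eqAmodMr (mu2_Aint b) (sqr_mod3 b))) _.
  under eq_bigr do rewrite mulr_natl mulrb.
  by rewrite -big_mkcond -big_distrl /= (sum_muM_neq0 charLp) ?oppr_eq0 // mulN1r.
apply: eqAmod_trans (eqAmod_sum row_mod3) _; rewrite sumrN.
by rewrite (sum_muM_neq0 charLp) ?oppr_eq0 // opprK.
Qed.

Lemma nsol_mod3 (u : L) : (0 < s)%N -> coprime s #|L|.-1 -> u != 0 ->
    (forall b, (powsum b 1 ^+ 2 == (b != 0)%:R %[mod 3])%A) ->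
  (nsol u %% 3 == 2)%N.
Proof.
move=> s_gt0 cop u_neq0 sqr_mod3.
have := sum_powsum_sqr_mod3 s_gt0 cop u_neq0 sqr_mod3.
by rewrite sum_powsum_sqr (eqAmod_nat 3); apply: sqr_mul_mod3.
Qed.

End PowerSums.

Lemma nsol_ge2_card_le2 (L : finFieldType) s :
  (forall u : L, u != 0 -> (2 <= nsol s u)%N) -> (#|L| <= 2)%N.
Proof.
move=> nsol_ge2; suff : (#|L|.-1 * 2 <= #|L|)%N by lia.
rewrite -(cardC1 (0 : L)) -sum_nat_const -[X in (_ <= X)%N](sum_nsol L s).
rewrite [X in (_ <= X)%N](bigD1 0) //=.
by apply: (leq_trans _ (leq_addl _ _)); apply: leq_sum.
Qed.

Lemma exists_powsum_dvd3 (L : finFieldType) p s : p \in [pchar L] ->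
    (2 < #|L|)%N -> (0 < s)%N -> s = 1 %[mod p.-1] -> coprime s #|L|.-1 ->
  exists2 a : L, a != 0 & (3 %| powsum p s a 1)%C.
Proof.
move=> charLp L_gt2 s_gt0 s_mod cop.
pose dvd3 (a : L) := (a != 0) && (3 %| powsum p s a 1)%C.
have [a /andP[a_neq0 a_dvd3] | no_a] := pickP dvd3; first by exists a.
have sqr_mod3 (b : L) : (powsum p s b 1 ^+ 2 == (b != 0)%:R %[mod 3])%A.
  have [-> | b_neq0] := eqVneq b 0; first by rewrite powsum0_1 // expr0n.
  apply: Cint_sqr_mod3; first exact: powsum_int.
  by have := no_a b; rewrite /dvd3 b_neq0 => /negbT.
suff : (#|L| <= 2)%N by rewrite leqNgt L_gt2.
apply: (@nsol_ge2_card_le2 L s) => u u_neq0.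
have /eqP nsol_u := nsol_mod3 charLp s_gt0 cop u_neq0 sqr_mod3.
by rewrite (divn_eq (nsol s u) 3) nsol_u leq_addl.
Qed.

Unset Implicit Arguments.

Theorem mainTheorem3 (L : finFieldType) (p : nat) (hp : p \in [pchar L])
  (hq : (2 < #|L|)%N) (s : nat) (hs : (0 < s)%N)
  (hs1 : s = 1 %[mod p.-1]) (hcop : coprime s #|L|.-1) :
  exists k : int, frakD p (fun x : L => x ^+ s) = ((3 * k)%R)%:~R.
Proof.
have fourierE (a : L) : fourier p (fun x => x ^+ s) a = powsum p s a 1.
  by apply: eq_bigr => x _; rewrite mul1r.
have [a0 a0_neq0 a0_dvd3] := exists_powsum_dvd3 hp hq hs hs1 hcop.
have /dvdCP[_ /intrP[k ->] ->] : (3 %| frakD p (fun x : L => x ^+ s))%C.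
  rewrite /frakD (bigD1 a0) //= fourierE; apply: dvdC_mulr a0_dvd3.
  by apply: rpred_prod => a _; rewrite fourierE; apply: powsum_int.
by exists k; rewrite intrM mulrC.
Qed.
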